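(* Let $g$ be a positive integer, let $l\ge1$, and let $(a,a+g)$ be a consecutive prospective prime pair with gap $g$ in $S_l$. Let $k>l+2$. For $0\le m\le P_k-1$, let $\mathring{n}^g_{S_k^{(m)}}$ be the number of pairs derived from $(a,a+g)$ in $S_k$ that lie in the subset $S_k^{(m)}$, i.e. the number of tuples $(m_{l+1},\dots,m_k)$ with $0\le m_j\le P_j-1$ and $m_k=m$ such that, with $M=\sum_{j=l+1}^k m_jP_{j-1}\#$, both $a+M$ and $a+g+M$ are coprime to $P_k\#$. Then for every $0\le m\le P_k-1$, \[\mathring{n}^g_{S_k^{(m)}}\ge \mathring{n}^g_{k-2}\,(P_{k-1}-4)=(P_{k-1}-4)\prod_{i=l+1}^{k-2}(P_i-2)\cdot\prod_{\substack{i=l+1\\ P_i\mid g}}^{k-2}\frac{P_i-1}{P_i-2}.\]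
   Context: $P_k$ denotes the $k$-th prime ($P_1=2$) and $P_k\#=\prod_{i=1}^kP_i$. $S_k=\{N\in\mathbb{N}:5\le N\le 4+P_k\#\}$ and, for $0\le m\le P_k-1$, $S_k^{(m)}=\{N: 5+mP_{k-1}\#\le N\le 4+(m+1)P_{k-1}\#\}$. A prospective prime in $S_k$ is an $N\in S_k$ coprime to $P_k\#$; prospective primes $a<b$ in $S_k$ are consecutive if no integer strictly between them is coprime to $P_k\#$; a consecutive prospective prime pair with gap $g$ is a pair $(a,a+g)$ of consecutive prospective primes. For $j>l$, $\mathring{n}^g_j=\prod_{i=l+1}^{j}(P_i-2)\prod_{l+1\le i\le j,\,P_i\mid g}\frac{P_i-1}{P_i-2}$. *)

From HB Require Import structures.
From mathcomp Require Import all_boot all_order all_algebra.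
Set Implicit Arguments. Unset Strict Implicit. Unset Printing Implicit Defensive.
Import Order.TTheory GRing.Theory Num.Theory.

Definition nextp (n : nat) : nat :=
  ex_minn (let: exist2 p H1 H2 := prime_above n in
           ex_intro (fun p => (n < p) && prime p) p (introT andP (conj H1 H2))).

(* P k = k-th prime, 1-indexed: P 1 = 2, P 2 = 3, ...  (P 0 = 1 is a dummy) *)
Fixpoint P (k : nat) : nat :=
  match k with 0 => 1 | k'.+1 => nextp (P k') end.

Definition primorial (k : nat) : nat := \prod_(1 <= i < k.+1) P i.

Definition inS (k N : nat) : bool := (5 <= N) && (N <= 4 + primorial k).

Definition prospective (k N : nat) : bool := inS k N && coprime N (primorial k).

Definition consec_pair (k a g : nat) : Prop :=
  [/\ 0 < g, prospective k a, prospective k (a + g) &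
      forall n, a < n -> n < a + g -> ~~ coprime n (primorial k)].

(* Index i : 'I_(k-l) encodes j = l+1+i; values stored in 'I_(P k) and
   constrained by t i < P (l+1+i). *)
Definition derived_count (l k a g m : nat) : nat :=
  #|[set t : {ffun 'I_(k - l) -> 'I_(P k)} |
      [forall i : 'I_(k - l), t i < P (l + 1 + i)] &&
      [forall i : 'I_(k - l), (l + 1 + i == k) ==> (t i == m :> nat)] &&
      (let M := \sum_(i < k - l) t i * primorial (l + i) in
       coprime (a + M) (primorial k) && coprime (a + g + M) (primorial k))]|.

Definition nring (g l j : nat) : rat :=
  ((\prod_(l + 1 <= i < j.+1) ((P i)%:R - 2)) *
   (\prod_(l + 1 <= i < j.+1 | (P i %| g)%N) (((P i)%:R - 1) / ((P i)%:R - 2))))%R.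

(* Write a derived pair as (a + M, a + g + M) with M = sum_j m_j P_(j-1)#,
   and choose the digits m_(l+1), ..., m_(k-1) in increasing order of j.
   Every term of M after the j-th is a multiple of P_j, and P_(j-1)# is
   invertible mod P_j, so as m_j runs over [0, P_j) the number a + M runs
   over all residues mod P_j, and so does a + g + M.  Hence, whatever the
   earlier digits, at least P_j - 2 values of m_j keep both numbers prime
   to P_j, and at least P_j - 1 if P_j divides g.  The last free digit
   m_(k-1) must in addition keep both numbers prime to P_k (m_k = m is
   fixed); since P_(k-1) < P_k, each of the two numbers is divisible by P_k
   for at most one value of m_(k-1), which leaves at least P_(k-1) - 4
   values. *)

From mathcomp Require Import all_boot all_order all_algebra zify.
Import Order.TTheory GRing.Theory Num.Theory.
Set Implicit Arguments. Unset Strict Implicit.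

Lemma ltn_nextp n : n < nextp n.
Proof. by rewrite /nextp; case: ex_minnP => p /andP[]. Qed.

Lemma prime_nextp n : prime (nextp n).
Proof. by rewrite /nextp; case: ex_minnP => p /andP[]. Qed.

Lemma P_prime i : 0 < i -> prime (P i).
Proof. by case: i => // i _; apply: prime_nextp. Qed.

Lemma ltn_P : {homo P : i j / i < j}.
Proof. by apply: homo_ltn => [|i]; [exact: ltn_trans | exact: ltn_nextp]. Qed.

Lemma leq_P : {homo P : i j / i <= j}.
Proof. by move=> i j; rewrite leq_eqVlt => /predU1P[-> // | /ltn_P/ltnW]. Qed.

Lemma ltn_id_P i : i < P i.
Proof. by elim: i => // i IH; apply: leq_ltn_trans IH (ltn_P (ltnSn i)). Qed.

Lemma primorial0 : primorial 0 = 1.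
Proof. by rewrite /primorial big_geq. Qed.

Lemma primorialS k : primorial k.+1 = primorial k * P k.+1.
Proof. by rewrite /primorial big_nat_recr. Qed.

Lemma dvdn_P_primorial i k : 0 < i <= k -> P i %| primorial k.
Proof.
elim: k => [|k IH] /andP[i_gt0]; first by rewrite leqn0 => /eqP i0; rewrite i0 in i_gt0.
rewrite primorialS leq_eqVlt => /predU1P[-> | lt_ik]; first exact: dvdn_mull.
by rewrite dvdn_mulr // IH // i_gt0.
Qed.

Lemma coprime_primorialP x k :
  reflect (forall i, 0 < i <= k -> coprime x (P i)) (coprime x (primorial k)).
Proof.
apply: (iffP idP) => [cop i ik | cop]; first exact: coprime_dvdr (dvdn_P_primorial ik) cop.
elim: k cop => [|k IH] cop; first by rewrite primorial0 coprimen1.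
rewrite primorialS coprimeMr cop ?leqnn // andbT.
by apply: IH => i /andP[i_gt0 ik]; rewrite cop // i_gt0 ltnW.
Qed.

Lemma coprime_primorial_P j k : j < k -> coprime (primorial j) (P k).
Proof.
move=> lt_jk; rewrite coprime_sym; apply/coprime_primorialP => i /andP[i_gt0 le_ij].
have lt_ik : i < k := leq_ltn_trans le_ij lt_jk.
have k_gt0 : 0 < k := leq_ltn_trans (leq0n i) lt_ik.
rewrite prime_coprime ?P_prime // dvdn_prime2 ?P_prime //.
by rewrite neq_ltn (ltn_P lt_ik) orbT.
Qed.

Lemma count_predI_ge T (a b : pred T) s :
  count a s + count b s - size s <= count (predI a b) s.
Proof. by rewrite -count_predUI; have := count_size (predU a b) s; lia. Qed.

Lemma count_dvdn_lin_le1 p x w n : coprime w p -> n <= p ->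
  count (fun v => p %| x + v * w) (iota 0 n) <= 1.
Proof.
move=> cop_wp le_np; pose f v := (x + v * w) %% p.
have inj_f : {in iota 0 n &, injective f}.
  move=> u v; rewrite !mem_iota !add0n => un vn /eqP; rewrite /f eqn_modDl.
  wlog le_uv : u v un vn / u <= v.
    move=> sym; case: (leqP u v) => [|/ltnW] uv; first exact: sym.
    by rewrite eq_sym => /sym->.
  rewrite eq_sym eqn_mod_dvd ?leq_mul2r ?le_uv ?orbT // -mulnBl Gauss_dvdl 1?coprime_sym //.
  by case/posnP: (v - u) => [|uv_gt0 /(dvdn_leq uv_gt0)]; lia.
have -> : count (fun v => p %| x + v * w) (iota 0 n) = count_mem 0 (map f (iota 0 n)).
  by rewrite count_map.
by rewrite count_uniq_mem ?map_inj_in_uniq ?iota_uniq // leq_b1.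
Qed.

Lemma count_coprime_lin p x w n : prime p -> coprime w p -> n <= p ->
  n - 1 <= count (fun v => coprime (x + v * w) p) (iota 0 n).
Proof.
move=> p_pr cop_wp le_np.
have := count_predC (fun v => p %| x + v * w) (iota 0 n).
have := count_dvdn_lin_le1 x cop_wp le_np.
have -> : count (fun v => coprime (x + v * w) p) (iota 0 n) =
          count (predC (fun v => p %| x + v * w)) (iota 0 n).
  by apply: eq_count => v; rewrite /= coprime_sym prime_coprime.
rewrite size_iota; lia.
Qed.

Lemma forall_ord_recl n (p : pred 'I_n.+1) :
  [forall i, p i] = p ord0 && [forall i : 'I_n, p (lift ord0 i)].
Proof.
apply/forallP/andP => [p_all | [p0 /forallP p_lift] i]; first by split; last apply/forallP.
by case: (unliftP ord0 i) => [j -> | ->].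
Qed.

Section FfunCons.
Variables (T : finType) (d : nat).

Definition ffun_cons (v : T) (f : {ffun 'I_d -> T}) : {ffun 'I_d.+1 -> T} :=
  [ffun i => if unlift ord0 i is Some j then f j else v].

Lemma ffun_cons0 v f : ffun_cons v f ord0 = v.
Proof. by rewrite ffunE unlift_none. Qed.

Lemma ffun_cons_lift v f i : ffun_cons v f (lift ord0 i) = f i.
Proof. by rewrite ffunE liftK. Qed.

Lemma big_ffun_cons R (idx : R) (op : Monoid.com_law idx) (F : {ffun 'I_d.+1 -> T} -> R) :
  \big[op/idx]_t F t =
  \big[op/idx]_(v : T) \big[op/idx]_(f : {ffun 'I_d -> T}) F (ffun_cons v f).
Proof.
rewrite pair_bigA (reindex (fun p => ffun_cons p.1 p.2)) //=.
exists (fun t => (t ord0, [ffun i => t (lift ord0 i)])) => [[v f] _ | t _].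
  by rewrite ffun_cons0; congr pair; apply/ffunP => i; rewrite ffunE ffun_cons_lift.
apply/ffunP => i; rewrite ffunE /=.
by case: (unliftP ord0 i) => [j -> | ->]; rewrite ?ffunE.
Qed.

End FfunCons.

Section DigitCount.
Variables (N : nat) (D : nat -> pred nat) (w : nat -> nat) (F : pred nat).

Definition digit_count (d j S : nat) : nat :=
  \sum_(t : {ffun 'I_d -> 'I_N})
    ([forall i : 'I_d, D (j + i) (t i)] && F (S + \sum_(i < d) t i * w (j + i))).

Lemma digit_count0 j S : digit_count 0 j S = F S.
Proof.
rewrite /digit_count (eq_bigr (fun _ => nat_of_bool (F S))) => [|t _].
  by rewrite sum_nat_const card_ffun !card_ord mul1n.
by rewrite big_ord0 addn0; case: forallP => // -[] [].
Qed.

Lemma digit_countS d j S :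
  digit_count d.+1 j S = \sum_(v < N) D j v * digit_count d j.+1 (S + v * w j).
Proof.
rewrite /digit_count big_ffun_cons; apply: eq_bigr => v _.
rewrite big_distrr; apply: eq_bigr => f _.
rewrite forall_ord_recl big_ord_recl ffun_cons0 addn0 addnA.
under eq_forallb => i do rewrite ffun_cons_lift lift0 -addSnnS.
under eq_bigr => i _ do rewrite ffun_cons_lift lift0 -addSnnS.
by rewrite -andbA; case: (D j v); rewrite /= ?Monoid.simpm.
Qed.

End DigitCount.

Lemma count_mul_le_sum n B (c : pred nat) (f : nat -> nat) :
  (forall v, v < n -> c v -> B <= f v) -> count c (iota 0 n) * B <= \sum_(v < n) f v.
Proof.
move=> le_Bf; rewrite -sum1_count big_distrl -(big_mkord xpredT f) /index_iota subn0.
rewrite [leqRHS](bigID c) /= -[leqLHS]addn0 leq_add //.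
rewrite big_seq_cond [leqRHS]big_seq_cond; apply: leq_sum => v /andP[].
by rewrite mem_iota mul1n => /andP[_ lt_vn]; exact: le_Bf.
Qed.

Lemma coprimeDr_dvd q n y : q %| y -> coprime (n + y) q = coprime n q.
Proof. by move=> /dvdnP[c ->]; rewrite -coprime_modl addnC modnMDl coprime_modl. Qed.

Section PairCoprime.
Variables a g : nat.

Definition pair_coprime q x := coprime (a + x) q && coprime (a + g + x) q.

Definition survivors p := if p %| g then p - 1 else p - 2.

Lemma pair_coprimeDr q x y : q %| y -> pair_coprime q (x + y) = pair_coprime q x.
Proof. by move=> dvd_qy; rewrite /pair_coprime !addnA !(coprimeDr_dvd _ dvd_qy). Qed.

Lemma pair_coprime_primorialP k x :
  reflect (forall i, 0 < i <= k -> pair_coprime (P i) x) (pair_coprime (primorial k) x).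
Proof.
apply: (iffP andP) => [[/coprime_primorialP cop_a /coprime_primorialP cop_ag] i ik | cop].
  by rewrite /pair_coprime cop_a ?cop_ag.
by split; apply/coprime_primorialP => i /cop /andP[].
Qed.

Lemma count_pair_coprime_lin p x w n : prime p -> coprime w p -> n <= p ->
  n - 2 <= count (fun v => pair_coprime p (x + v * w)) (iota 0 n).
Proof.
move=> p_pr cop_wp le_np.
have := count_predI_ge (fun v => coprime (a + x + v * w) p)
                       (fun v => coprime (a + g + x + v * w) p) (iota 0 n).
have := count_coprime_lin (a + x) p_pr cop_wp le_np.
have := count_coprime_lin (a + g + x) p_pr cop_wp le_np.
have -> : count (fun v => pair_coprime p (x + v * w)) (iota 0 n) =
          count (predI (fun v => coprime (a + x + v * w) p)
                       (fun v => coprime (a + g + x + v * w) p)) (iota 0 n).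
  by apply: eq_count => v; rewrite /pair_coprime /= !addnA.
by rewrite size_iota; lia.
Qed.

Lemma count_pair_coprime p x w : prime p -> coprime w p ->
  survivors p <= count (fun v => pair_coprime p (x + v * w)) (iota 0 p).
Proof.
move=> p_pr cop_wp; rewrite /survivors; case: ifP => [dvd_pg | _]; last first.
  exact: count_pair_coprime_lin.
rewrite (@eq_count _ _ (fun v => coprime (a + x + v * w) p)) ?count_coprime_lin // => v.
by rewrite /pair_coprime addnAC (coprimeDr_dvd _ dvd_pg) andbb addnA.
Qed.

Section Sieve.
Variables k m : nat.
Hypothesis lt_m : m < P k.

Definition digit_ok (j v : nat) := (v < P j) && ((j == k) ==> (v == m)).

Local Notation sieve_count :=
  (digit_count (P k) digit_ok (fun i => primorial i.-1) (pair_coprime (primorial k))).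

Lemma sieve_count_last_digit S :
  sieve_count 1 k S = pair_coprime (primorial k) (S + m * primorial k.-1).
Proof.
rewrite digit_countS (bigD1 (Ordinal lt_m)) //= big1 => [|v ne_vm].
  by rewrite /digit_ok lt_m !eqxx mul1n digit_count0 addn0.
have /negbTE ne : v != m :> nat by apply: contra ne_vm => /eqP e; apply/eqP/val_inj.
by rewrite /digit_ok eqxx ne andbF.
Qed.

Lemma sieve_count_free_digit d j S : j < k ->
  sieve_count d.+1 j S = \sum_(v < P j) sieve_count d j.+1 (S + v * primorial j.-1).
Proof.
move=> lt_jk; pose F v := sieve_count d j.+1 (S + v * primorial j.-1).
rewrite digit_countS (big_ord_widen _ F (leq_P (ltnW lt_jk))) [RHS]big_mkcond; apply: eq_bigr => v _; rewrite /digit_ok (ltn_eqF lt_jk) andbT.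
by case: ifP; rewrite ?Monoid.simpm.
Qed.

Lemma sieve_count_last_two j S : j.+1 = k -> 0 < j ->
  (forall i, 0 < i < j -> pair_coprime (P i) S) -> P j - 4 <= sieve_count 2 j S.
Proof.
move=> jk j_gt0 S_ok; have lt_jk : j < k by rewrite -jk.
have k_gt0 : 0 < k := leq_ltn_trans (leq0n j) lt_jk.
rewrite sieve_count_free_digit //; under eq_bigr => v _ do rewrite jk sieve_count_last_digit.
pose x := S + m * primorial k.-1.
pose A v := pair_coprime (P j) (x + v * primorial j.-1).
pose B v := pair_coprime (P k) (x + v * primorial j.-1).
have cop_j : coprime (primorial j.-1) (P j) by apply: coprime_primorial_P; rewrite ltn_predL.
have cop_k : coprime (primorial j.-1) (P k).
  exact/coprime_primorial_P/(leq_ltn_trans (leq_pred j) lt_jk).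
have cA : P j - 2 <= count A (iota 0 (P j)) :=
  count_pair_coprime_lin x (P_prime j_gt0) cop_j (leqnn _).
have cB : P j - 2 <= count B (iota 0 (P j)) :=
  count_pair_coprime_lin x (P_prime k_gt0) cop_k (leq_P (ltnW lt_jk)).
have cAB : P j - 4 <= count (predI A B) (iota 0 (P j)).
  by have := count_predI_ge A B (iota 0 (P j)); rewrite size_iota; lia.
apply: (leq_trans cAB); rewrite -[leqLHS]muln1.
pose F v := pair_coprime (primorial k) (S + v * primorial j.-1 + m * primorial k.-1).
apply: (@count_mul_le_sum _ _ _ F) => v _ /andP[A_v B_v]; rewrite lt0b.
apply/pair_coprime_primorialP => i /andP[i_gt0 le_ik].
case: (ltngtP i j) => [lt_ij | lt_ji | ->]; last by rewrite addnAC.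
  have le_ij1 : i <= j.-1 by rewrite -ltnS prednK.
  rewrite -addnA pair_coprimeDr ?S_ok ?i_gt0 //.
  by rewrite dvdn_add // dvdn_mull // dvdn_P_primorial // i_gt0 // -jk ltnW.
have -> : i = k by apply/eqP; rewrite eqn_leq le_ik -jk.
by rewrite addnAC.
Qed.

Lemma sieve_count_ge n j S : j + n.+1 = k -> 0 < j ->
  (forall i, 0 < i < j -> pair_coprime (P i) S) ->
  (\prod_(j <= i < k.-1) survivors (P i)) * (P k.-1 - 4) <= sieve_count n.+2 j S.
Proof.
elim: n j S => [|n IH] j S jk j_gt0 S_ok.
  rewrite addn1 in jk; have -> : k.-1 = j by rewrite -jk.
  by rewrite big_geq // mul1n sieve_count_last_two.
have lt_jk1 : j < k.-1 by rewrite -jk addnS /= -addn1 leq_add2l.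
rewrite sieve_count_free_digit ?(leq_trans lt_jk1) ?leq_pred // (big_ltn lt_jk1) -mulnA.
have cop_j : coprime (primorial j.-1) (P j) by apply: coprime_primorial_P; rewrite ltn_predL.
apply: leq_trans (leq_mul (count_pair_coprime S (P_prime j_gt0) cop_j) (leqnn _)) _.
pose F v := sieve_count n.+2 j.+1 (S + v * primorial j.-1).
apply: (@count_mul_le_sum _ _ _ F) => v _ good_v; apply: IH => //; first by rewrite addSnnS.
move=> i /andP[i_gt0]; rewrite ltnS leq_eqVlt => /predU1P[-> // | lt_ij].
rewrite pair_coprimeDr ?S_ok ?i_gt0 // dvdn_mull // dvdn_P_primorial //.
by rewrite i_gt0 -ltnS prednK.
Qed.

Lemma derived_countE l : derived_count l k a g m = sieve_count (k - l) l.+1 0.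
Proof.
rewrite /derived_count /digit_count -sum1_card big_mkcond /=.
apply: eq_bigr => t _; rewrite inE addn1 add0n.
have -> : [forall i : 'I_(k - l), t i < P (l.+1 + i)] &&
          [forall i : 'I_(k - l), (l.+1 + i == k) ==> (t i == m :> nat)] =
          [forall i : 'I_(k - l), digit_ok (l.+1 + i) (t i)].
  apply/andP/forallP => [[/forallP lt_t /forallP eq_t] i | ok_t].
    by rewrite /digit_ok lt_t eq_t.
  by split; apply/forallP => i; case/andP: (ok_t i).
by rewrite /pair_coprime; case: [&& _, _ & _].
Qed.

End Sieve.
End PairCoprime.

Lemma nring_survivors g l j : 0 < l ->
  nring g l j = ((\prod_(l.+1 <= i < j.+1) survivors g (P i))%:R : rat).
Proof.
move=> l_gt0; rewrite /nring addn1 natr_prod [X in (_ * X)%R]big_mkcond -big_split /=.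
apply: eq_big_nat => i /andP[lt_li _].
have P_ge3 : 3 <= P i := leq_ltn_trans (leq_ltn_trans l_gt0 lt_li) (ltn_id_P i).
have P2_neq0 : ((P i)%:R - 2 : rat) != 0%R.
  by rewrite subr_eq0 -[2%R]/(2%:R)%R eqr_nat; apply/eqP; lia.
rewrite /survivors; case: ifP => _; last by rewrite mulr1 natrB //; lia.
by rewrite mulrC divfK // natrB //; lia.
Qed.

Theorem theorem2 (g l k a m : nat) :
  0 < g -> 1 <= l -> consec_pair l a g -> l + 2 < k -> m < P k ->
  (nring g l (k - 2) * ((P (k - 1))%:R - 4) <= (derived_count l k a g m)%:R)%R.
Proof.
move=> _ l_gt0 [_ /andP[_ cop_a] /andP[_ cop_ag] _] lt_l2k lt_m.
have le4P : 4 <= P k.-1 by apply: leq_ltn_trans (ltn_id_P k.-1); lia.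
rewrite nring_survivors // (_ : (k - 2).+1 = k.-1) ?subn1; last by lia.
rewrite -[4%R]/(4%:R)%R -natrB // -natrM ler_nat derived_countE.
have -> : k - l = (k - l - 2).+2 by lia.
apply: sieve_count_ge => //; first by lia.
move=> i /andP[i_gt0 lt_il]; have le_il : 0 < i <= l by rewrite i_gt0.
by rewrite /pair_coprime !addn0 (coprime_primorialP _ _ cop_a)
  ?(coprime_primorialP _ _ cop_ag).
Qed.
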